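(* Let $(M,\mathbf g,\nabla)$ be a Riemann–Cartan space with Levi-Civita connection $D$, let $\{\mathbf e_\alpha\}$ be a moving frame with dual coframe $\{\theta^\alpha\}$, and let $\boldsymbol\partial=\theta^\alpha\nabla_{\mathbf e_\alpha}$ be the Dirac operator acting on sections of the Clifford bundle $\mathcal C\ell(M,\mathtt g)$. Then for every smooth scalar function $f$, $$\boldsymbol\partial^2 f=g^{\beta\rho}\nabla_{\mathbf e_\beta}\nabla_{\mathbf e_\rho}f-g^{\beta\rho}\Gamma^{\alpha}_{\beta\rho}\mathbf e_\alpha(f)-\tfrac12 T^{\alpha}_{\beta\rho}\,\theta^\beta\wedge\theta^\rho\,\mathbf e_\alpha(f),$$ and equivalently $$\boldsymbol\partial^2 f=g^{\beta\alpha}\nabla_{\mathbf e_\beta}\nabla_{\mathbf e_\alpha}f-g^{\beta\rho}\mathring\Gamma^{\alpha}_{\beta\rho}\mathbf e_\alpha(f)+T^{\alpha}_{\alpha\beta}\,\mathbf e^\beta(f)-\tfrac12T^{\alpha}_{\rho\sigma}\,\theta^\rho\wedge\theta^\sigma\,\mathbf e_\alpha(f),$$ where $\mathbf e^\beta=g^{\beta\delta}\mathbf e_\delta$.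
   Context: $\mathbf g$ is a smooth nondegenerate metric on $M$, $g^{\alpha\beta}=\theta^\alpha\cdot\theta^\beta$. A Riemann–Cartan space is a triple $(M,\mathbf g,\nabla)$ with $\nabla$ a linear connection, $\nabla\mathbf g=0$, and nonzero torsion; $\nabla$ acts on forms (as sections of the Clifford bundle of differential forms, where $uv=u\cdot v+u\wedge v$ for $1$-forms) as a derivation, and on functions by $\nabla_{\mathbf e_\alpha}f=\mathbf e_\alpha(f)$. Notation: $[\mathbf e_\beta,\mathbf e_\rho]=c^\alpha_{\beta\rho}\mathbf e_\alpha$, $\nabla_{\mathbf e_\beta}\theta^\alpha=-\Gamma^\alpha_{\beta\rho}\theta^\rho$, $D_{\mathbf e_\beta}\theta^\alpha=-\mathring\Gamma^\alpha_{\beta\rho}\theta^\rho$, torsion components $T^\alpha_{\beta\rho}=\Gamma^\alpha_{\beta\rho}-\Gamma^\alpha_{\rho\beta}-c^\alpha_{\beta\rho}$. $\boldsymbol\partial^2f$ means $\theta^\beta\nabla_{\mathbf e_\beta}(\theta^\rho\nabla_{\mathbf e_\rho}f)$ with Clifford products. *)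

(* Algebraic (frame-component) model of a Riemann-Cartan
   space: A plays the role of the commutative ring of smooth functions on M,
   the frame fields e_alpha act on A as derivations, and the relevant part of
   the Clifford bundle (scalars + 2-forms) is represented by components
   with respect to the coframe theta^alpha. *)
From HB Require Import structures.
From mathcomp Require Import all_boot all_order all_algebra.
Set Implicit Arguments. Unset Strict Implicit. Unset Printing Implicit Defensive.
Import Order.TTheory GRing.Theory Num.Theory.
Local Open Scope ring_scope.

(* A Clifford element of the form  s + (1/2) B_{ij} theta^i /\ theta^j,
   with B stored as its full (antisymmetric) component array. *)
Record cl2 (A : Type) (n : nat) := Cl2 { cl_scal : A; cl_biv : 'I_n -> 'I_n -> A }.

Section Defs.
Variables (A : comUnitRingType) (n : nat).

(* components of  sum_{b,r} a_{br} theta^b /\ theta^r *)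
Definition wedge_sum (a : 'I_n -> 'I_n -> A) : 'I_n -> 'I_n -> A :=
  fun i j => a i j - a j i.

(* 1-forms u = u_a theta^a are component functions *)
Definition coframe (b : 'I_n) : 'I_n -> A := fun a => (a == b)%:R.

(* Clifford product of 1-forms: u v = u . v + u /\ v, with
   theta^a . theta^b = g^{ab} *)
Definition cliff (g : 'I_n -> 'I_n -> A) (u v : 'I_n -> A) : cl2 A n :=
  Cl2 (\sum_a \sum_b g a b * u a * v b) (wedge_sum (fun a b => u a * v b)).

Definition cl2_sum (F : 'I_n -> cl2 A n) : cl2 A n :=
  Cl2 (\sum_b cl_scal (F b)) (fun i j => \sum_b cl_biv (F b) i j).

(* nabla_{e_b} of the 1-form u_r theta^r, with
   nabla_{e_b} theta^a = - Gam^a_{b r} theta^r  (Gam a b r = Gam^a_{br}) *)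
Definition nabla1 (Gam : 'I_n -> 'I_n -> 'I_n -> A) (e : 'I_n -> A -> A)
  (b : 'I_n) (u : 'I_n -> A) : 'I_n -> A :=
  fun r => e b (u r) - \sum_a u a * Gam a b r.

(* Dirac operator on functions: theta^r nabla_{e_r} f = (e_r f) theta^r *)
Definition dirac0 (e : 'I_n -> A -> A) (f : A) : 'I_n -> A := fun r => e r f.

(* Dirac operator on 1-forms: theta^b nabla_{e_b} u (Clifford product) *)
Definition dirac1 (g : 'I_n -> 'I_n -> A) (Gam : 'I_n -> 'I_n -> 'I_n -> A)
  (e : 'I_n -> A -> A) (u : 'I_n -> A) : cl2 A n :=
  cl2_sum (fun b => cliff g (coframe b) (nabla1 Gam e b u)).

Definition dirac2 g Gam e (f : A) : cl2 A n := dirac1 g Gam e (dirac0 e f).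

Definition torsion (Gam c : 'I_n -> 'I_n -> 'I_n -> A) (a b r : 'I_n) : A :=
  Gam a b r - Gam a r b - c a b r.

Definition is_derivation (D : A -> A) : Prop :=
  forall x y, D (x + y) = D x + D y /\ D (x * y) = D x * y + x * D y.

Definition frame_comm (e : 'I_n -> A -> A) (c : 'I_n -> 'I_n -> 'I_n -> A) : Prop :=
  forall b r f, e b (e r f) - e r (e b f) = \sum_a c a b r * e a f.

Definition metric_sym (g : 'I_n -> 'I_n -> A) : Prop := forall a b, g a b = g b a.

Definition metric_nondeg (g : 'I_n -> 'I_n -> A) : Prop :=
  (\matrix_(i, j) g i j) \in unitmx.

(* nabla g = 0: e_c(g^{ab}) = (nabla_c theta^a).theta^b + theta^a.(nabla_c theta^b) *)
Definition metric_compatible (g : 'I_n -> 'I_n -> A)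
  (Gam : 'I_n -> 'I_n -> 'I_n -> A) (e : 'I_n -> A -> A) : Prop :=
  forall k a b, e k (g a b) = - (\sum_d Gam a k d * g d b) - (\sum_d Gam b k d * g a d).

Definition riemann_cartan g Gam e c : Prop :=
  metric_compatible g Gam e /\ exists a b r, torsion Gam c a b r != 0.

Definition levi_civita g Gamo e c : Prop :=
  metric_compatible g Gamo e /\ forall a b r, torsion Gamo c a b r = 0.

End Defs.

(* Expanding theta^b nabla_b (e_r(f) theta^r) with the Clifford product splits the
   square of the Dirac operator into the g-trace of the covariant Hessian of f and
   its antisymmetric part; since [e_b, e_r] = c^a_br e_a, the latter is
   -T^a_br e_a(f), which is the first formula.  For the second, the difference
   K = Gam - Gamo of two metric connections has K^{xy}_k := K^x_kd g^dy skew in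
   x, y.  Hence its trace K^a_ba vanishes (2 being invertible), so that, Gamo
   being torsion free, T^a_ab = K^a_ab - K^a_ba = K^a_ab after summing over a;
   skewness then turns g^br K^a_br e_a(f) into -T^a_ab e^b(f). *)

From HB Require Import structures.
From mathcomp Require Import all_boot all_order all_algebra.
From mathcomp Require Import ring.
From Stdlib Require Import FunctionalExtensionality.
Import GRing.Theory.
Set Implicit Arguments. Unset Strict Implicit. Unset Printing Implicit Defensive.
Local Open Scope ring_scope.

Section FrameAlgebra.
Variables (A : comUnitRingType) (n : nat).
Implicit Types (g X : 'I_n -> 'I_n -> A) (Gam c : 'I_n -> 'I_n -> 'I_n -> A).
Implicit Types (e : 'I_n -> A -> A) (u v : 'I_n -> A) (f : A).

Lemma sum_delta (F : 'I_n -> A) b : \sum_a (a == b)%:R * F a = F b.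
Proof.
under eq_bigr do rewrite mulr_natl mulrb.
by rewrite -big_mkcond big_pred1_eq.
Qed.

Lemma half_add_half : (2%:R : A) \is a GRing.unit ->
  forall x : A, 2%:R^-1 * x + 2%:R^-1 * x = x.
Proof.
move=> two_unit x; rewrite -mulrDl -[RHS]mul1r; congr (_ * _).
by rewrite -[RHS](mulVr two_unit); ring.
Qed.

Lemma wedge_sum_half X : (2%:R : A) \is a GRing.unit ->
  (forall i j, X j i = - X i j) -> wedge_sum (fun i j => 2%:R^-1 * X i j) = X.
Proof.
move=> two_unit Xskew; apply: functional_extensionality => i.
apply: functional_extensionality => j.
by rewrite /wedge_sum (Xskew i j) mulrN opprK half_add_half.
Qed.

Lemma sum_skew_mul_sym X Y : (2%:R : A) \is a GRing.unit ->
  (forall i j, X j i = - X i j) -> (forall i j, Y j i = Y i j) ->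
  \sum_i \sum_j X i j * Y j i = 0.
Proof.
move=> two_unit Xskew Ysym; set S := \sum_i _.
have SN : S = - S.
  rewrite {1}/S exchange_big -sumrN; apply: eq_bigr => j _.
  by rewrite -sumrN; apply: eq_bigr => i _; rewrite Xskew Ysym mulNr.
by rewrite -(half_add_half two_unit S) {2}SN mulrN subrr.
Qed.

Lemma dirac1E g Gam e u :
  dirac1 g Gam e u = Cl2 (\sum_b \sum_r g b r * nabla1 Gam e b u r)
                        (wedge_sum (fun b => nabla1 Gam e b u)).
Proof.
rewrite /dirac1 /cl2_sum /cliff /coframe /=; congr Cl2.
  apply: eq_bigr => b _.
  rewrite -(sum_delta (fun a => \sum_r g a r * nabla1 Gam e b u r)).
  apply: eq_bigr => a _.
  by rewrite big_distrr /=; apply: eq_bigr => r _; ring.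
apply: functional_extensionality => i; apply: functional_extensionality => j.
by rewrite /wedge_sum sumrB; congr (_ - _);
  under eq_bigr do rewrite eq_sym; rewrite sum_delta.
Qed.

Lemma nabla1_dirac0_skew c Gam e f i j : frame_comm e c ->
  nabla1 Gam e i (dirac0 e f) j - nabla1 Gam e j (dirac0 e f) i
  = - \sum_a torsion Gam c a i j * e a f.
Proof.
move=> hcomm; rewrite /nabla1 /dirac0.
have -> : \sum_a torsion Gam c a i j * e a f
  = \sum_a e a f * Gam a i j - \sum_a e a f * Gam a j i - (e i (e j f) - e j (e i f)).
  by rewrite hcomm -!sumrB; apply: eq_bigr => a _; rewrite /torsion; ring.
ring.
Qed.

Lemma dirac2_torsion c g Gam e f : (2%:R : A) \is a GRing.unit -> frame_comm e c ->
  dirac2 g Gam e f =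
    Cl2 (\sum_b \sum_r g b r * e b (e r f)
         - \sum_b \sum_r g b r * (\sum_a Gam a b r * e a f))
        (wedge_sum (fun b r => - (2%:R^-1 * \sum_a torsion Gam c a b r * e a f))).
Proof.
move=> two_unit hcomm; rewrite /dirac2 dirac1E; congr Cl2.
  rewrite -!sumrB; apply: eq_bigr => b _; rewrite -sumrB; apply: eq_bigr => r _.
  rewrite /nabla1 /dirac0 mulrBr; congr (_ - _); congr (_ * _).
  by apply: eq_bigr => a _; rewrite mulrC.
pose T i j := - \sum_a torsion Gam c a i j * e a f.
have hessT i j : nabla1 Gam e i (dirac0 e f) j - nabla1 Gam e j (dirac0 e f) i = T i j.
  exact: nabla1_dirac0_skew.
have skewT i j : T j i = - T i j by rewrite -hessT -opprB hessT.
transitivity (wedge_sum (fun b r => 2%:R^-1 * T b r)).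
  rewrite wedge_sum_half //.
  by do 2 apply: functional_extensionality => ?; rewrite /wedge_sum hessT.
by congr wedge_sum; do 2 apply: functional_extensionality => ?; rewrite mulrN.
Qed.

Definition conn_diff Gam (Gam0 : 'I_n -> 'I_n -> 'I_n -> A) a b r : A :=
  Gam a b r - Gam0 a b r.

Definition conn_raise g Gam k x y : A := \sum_d Gam x k d * g d y.

Lemma torsion_conn_diff Gam c (Gam0 : 'I_n -> 'I_n -> 'I_n -> A) a b r :
  torsion Gam0 c a b r = 0 ->
  torsion Gam c a b r = conn_diff Gam Gam0 a b r - conn_diff Gam Gam0 a r b.
Proof. by move=> h0; rewrite -[LHS]subr0 -h0 /torsion /conn_diff; ring. Qed.

Lemma sum_conn_raise g Gam k x v :
  \sum_b Gam x k b * (\sum_d g b d * v d) = \sum_d conn_raise g Gam k x d * v d.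
Proof.
under eq_bigr do rewrite big_distrr.
rewrite exchange_big; apply: eq_bigr => d _ /=.
by rewrite /conn_raise big_distrl; apply: eq_bigr => b _ /=; rewrite mulrA.
Qed.

Section MetricConnections.
Variables (g : 'I_n -> 'I_n -> A) (e : 'I_n -> A -> A).
Hypothesis hsym : metric_sym g.

Lemma metric_compatibleE Gam : metric_compatible g Gam e -> forall k x y,
  e k (g x y) = - (conn_raise g Gam k x y + conn_raise g Gam k y x).
Proof.
move=> hmc k x y; rewrite hmc opprD; congr (_ - _).
by apply: eq_bigr => d _; rewrite hsym.
Qed.

Lemma conn_raise_diff Gam Gam0 k x y :
  conn_raise g (conn_diff Gam Gam0) k x y = conn_raise g Gam k x y - conn_raise g Gam0 k x y.
Proof. by rewrite /conn_raise -sumrB; apply: eq_bigr => d _; rewrite mulrBl. Qed.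

Lemma conn_raise_diff_skew Gam Gam0 k x y :
  metric_compatible g Gam e -> metric_compatible g Gam0 e ->
  conn_raise g (conn_diff Gam Gam0) k x y = - conn_raise g (conn_diff Gam Gam0) k y x.
Proof.
move=> hmc hmc0; have := etrans (esym (metric_compatibleE hmc k x y))
                                (metric_compatibleE hmc0 k x y).
rewrite !conn_raise_diff => /oppr_inj /eqP; rewrite -subr_eq0 => /eqP E.
by apply/eqP; rewrite -addr_eq0; apply/eqP; rewrite -[RHS]E; ring.
Qed.

Hypothesis hnd : metric_nondeg g.

Let Ninv := invmx (\matrix_(i, j) g i j).

Lemma conn_raise_lower Gam k x y : \sum_m conn_raise g Gam k x m * Ninv m y = Gam x k y.
Proof.
have hNi d : \sum_m g d m * Ninv m y = (d == y)%:R.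
  have := congr1 (fun M : 'M[A]_n => M d y) (mulmxV hnd); rewrite !mxE => <-.
  by apply: eq_bigr => m _; rewrite mxE.
rewrite -(sum_delta (fun d => Gam x k d)) /conn_raise.
under eq_bigr do rewrite big_distrl.
rewrite exchange_big; apply: eq_bigr => d _ /=.
by rewrite -hNi big_distrl; apply: eq_bigr => m _; rewrite /= [RHS]mulrC mulrA.
Qed.

Lemma Ninv_sym i j : Ninv j i = Ninv i j.
Proof.
have NT : Ninv^T = Ninv.
  by rewrite trmx_inv; congr invmx; apply/matrixP => a b; rewrite !mxE hsym.
by rewrite -[in LHS]NT mxE.
Qed.

Lemma conn_diff_trace Gam Gam0 b : (2%:R : A) \is a GRing.unit ->
  metric_compatible g Gam e -> metric_compatible g Gam0 e ->
  \sum_a conn_diff Gam Gam0 a b a = 0.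
Proof.
move=> two_unit hmc hmc0.
under eq_bigr do rewrite -conn_raise_lower.
apply: sum_skew_mul_sym => // [i j|i j]; first exact: conn_raise_diff_skew.
exact: Ninv_sym.
Qed.

Variables (c Gam Gam0 : 'I_n -> 'I_n -> 'I_n -> A).
Hypotheses (hmc : metric_compatible g Gam e) (hmc0 : metric_compatible g Gam0 e).

Lemma metric_trace_conn_diff v :
  \sum_b \sum_r g b r * (\sum_a conn_diff Gam Gam0 a b r * v a)
  = - \sum_a \sum_d conn_raise g (conn_diff Gam Gam0) a a d * v d.
Proof.
rewrite -sumrN; apply: eq_bigr => b _.
transitivity (\sum_a conn_raise g (conn_diff Gam Gam0) b a b * v a).
  under eq_bigr do rewrite big_distrr.
  rewrite exchange_big; apply: eq_bigr => a _ /=.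
  by rewrite /conn_raise big_distrl; apply: eq_bigr => r _ /=; rewrite hsym; ring.
by rewrite -sumrN; apply: eq_bigr => a _; rewrite conn_raise_diff_skew // mulNr.
Qed.

Lemma torsion_trace_conn_diff v : (2%:R : A) \is a GRing.unit ->
  (forall a b r, torsion Gam0 c a b r = 0) ->
  \sum_a \sum_b torsion Gam c a a b * (\sum_d g b d * v d)
  = \sum_a \sum_d conn_raise g (conn_diff Gam Gam0) a a d * v d.
Proof.
move=> two_unit htf.
have trace0 : \sum_b (\sum_a conn_diff Gam Gam0 a b a) * (\sum_d g b d * v d) = 0.
  by apply: big1 => b _; rewrite conn_diff_trace // mul0r.
rewrite -[RHS]subr0 -[X in _ - X]trace0.
under [X in _ - X]eq_bigr do rewrite big_distrl.
rewrite [X in _ - X]exchange_big -sumrB; apply: eq_bigr => a _ /=.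
rewrite -sum_conn_raise -sumrB; apply: eq_bigr => b _.
by rewrite (torsion_conn_diff _ (htf a a b)) mulrBl.
Qed.

Lemma metric_trace_conn_change v : (2%:R : A) \is a GRing.unit ->
  (forall a b r, torsion Gam0 c a b r = 0) ->
  \sum_b \sum_r g b r * (\sum_a Gam a b r * v a)
  = \sum_b \sum_r g b r * (\sum_a Gam0 a b r * v a)
    - \sum_a \sum_b torsion Gam c a a b * (\sum_d g b d * v d).
Proof.
move=> two_unit htf.
rewrite torsion_trace_conn_diff // -metric_trace_conn_diff -big_split.
apply: eq_bigr => b _ /=; rewrite -big_split; apply: eq_bigr => r _ /=.
rewrite -mulrDr -big_split; congr (_ * _); apply: eq_bigr => a _ /=.
by rewrite /conn_diff; ring.
Qed.

End MetricConnections.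
End FrameAlgebra.

Theorem mainTheorem3 (A : comUnitRingType) (n : nat)
  (g : 'I_n -> 'I_n -> A) (e : 'I_n -> A -> A)
  (c Gam Gamo : 'I_n -> 'I_n -> 'I_n -> A)
  (two_unit : (2%:R : A) \is a GRing.unit)
  (hder : forall a, is_derivation (e a))
  (hcomm : frame_comm e c)
  (hsym : metric_sym g) (hnd : metric_nondeg g)
  (hRC : riemann_cartan g Gam e c)
  (hLC : levi_civita g Gamo e c)
  (f : A) :
  dirac2 g Gam e f =
    Cl2 (\sum_b \sum_r g b r * e b (e r f)
         - \sum_b \sum_r g b r * (\sum_a Gam a b r * e a f))
        (wedge_sum (fun b r => - (2%:R^-1 * \sum_a torsion Gam c a b r * e a f)))
  /\
  dirac2 g Gam e f =
    Cl2 (\sum_b \sum_a g b a * e b (e a f)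
         - \sum_b \sum_r g b r * (\sum_a Gamo a b r * e a f)
         + \sum_a \sum_b torsion Gam c a a b * (\sum_d g b d * e d f))
        (wedge_sum (fun r s => - (2%:R^-1 * \sum_a torsion Gam c a r s * e a f))).
Proof.
have [hmc _] := hRC; have [hmc0 htf] := hLC.
split; first exact: dirac2_torsion.
rewrite (dirac2_torsion _ _ _ two_unit hcomm).
by rewrite (metric_trace_conn_change hsym hnd hmc hmc0 _ two_unit htf) opprB addrA addrAC.
Qed.
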